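(* Let $\Sigma$, $\mathcal S=\mathcal S^+\cup\mathcal S^-$, $\mathsf{ce}$, $\mathsf{Act}$, $\mathsf{Enc}$, $\Sigma_{\mathsf{Act}}$, $\widehat\Sigma$, $\widehat{\mathcal S}=\widehat{\mathcal S}^+\cup\widehat{\mathcal S}^-$ and $\widehat D$ be as in the context. For any two words $w_1,w_2\in\mathrm{pref}(\mathcal S)$, if the runs of $\widehat D$ on $\mathsf{Enc}(w_1)$ and on $\mathsf{Enc}(w_2)$ both exist and reach the same state, then $\mathsf{Act}(w_1)\sim\mathsf{Act}(w_2)$.
   Context: Let $\Sigma=\{\sigma_1,\dots,\sigma_k\}$ be a finite alphabet. A sample set is a pair of finite sets of words $\mathcal S^+,\mathcal S^-\subseteq\Sigma^*$ with $\mathcal S^+\cap\mathcal S^-=\emptyset$; write $\mathcal S=\mathcal S^+\cup\mathcal S^-$ and $\mathrm{pref}(\mathcal S)$ for the set of all prefixes (including $\varepsilon$ and the words themselves) of words of $\mathcal S$. We are given $\mathsf{ce}:\mathrm{pref}(\mathcal S)\to\mathbb N$ with $\mathsf{ce}(\varepsilon)=0$ and $\mathsf{ce}(w\sigma)-\mathsf{ce}(w)\in\{-1,0,+1\}$ whenever $w\sigma\in\mathrm{pref}(\mathcal S)$, $\sigma\in\Sigma$. For $d\in\mathbb N$, $\mathrm{sgn}(d)=0$ if $d=0$ and $1$ otherwise. For $w\in\mathrm{pref}(\mathcal S)$ define $\mathsf{Act}(w)\in\{0,1\}\times\{0,+1,-1,\bot\}^k$ by $\mathsf{Act}(w)[0]=\mathrm{sgn}(\mathsf{ce}(w))$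 and, for $i\in[1,k]$, $\mathsf{Act}(w)[i]=\mathsf{ce}(w\sigma_i)-\mathsf{ce}(w)$ if $w\sigma_i\in\mathrm{pref}(\mathcal S)$, and $\mathsf{Act}(w)[i]=\bot$ otherwise. For a tuple $\mathit{act}$ of this shape, $\mathit{act}|_{\sigma_i}$ denotes $\mathit{act}[i]$. Two such tuples $x,y$ are similar, $x\sim y$, if either $x[0]\neq y[0]$, or for all $i\in[1,k]$: $x[i]=\bot$ or $y[i]=\bot$ or $x[i]=y[i]$; otherwise $x\not\sim y$. Let $\widetilde\Sigma=\{\sigma^0,\sigma^1:\sigma\in\Sigma\}$ (fresh letters). For $w\in\mathrm{pref}(\mathcal S)$, $\mathsf{Enc}(\varepsilon)=\varepsilon$ and $\mathsf{Enc}(w)$ is the word over $\widetilde\Sigma$ of the same length with $\mathsf{Enc}(w)[0]=w[0]^0$ and $\mathsf{Enc}(w)[i]=w[i]^{\mathrm{sgn}(\mathsf{ce}(w[0\cdots i-1]))}$ for $i>0$ (positions indexed from $0$). Let $\Sigma_{\mathsf{Act}}=\{\mathsf{Act}(w):w\in\mathrm{pref}(\mathcal S)\}$, viewed as a set of fresh letters, and $\widehat\Sigma=\widetilde\Sigma\cup\Sigma_{\mathsf{Act}}$. The enriched sample over $\widehat\Sigma$ is: $\widehat{\mathcal S}^+=\{\mathsf{Enc}(w):w\in\mathcal S^+\}\cup\{\mathsf{Enc}(w)\cdot\mathsf{Act}(w):w\in\mathrm{pref}(\mathcal S)\}$ and $\widehat{\mathcal S}^-=\{\mathsf{Enc}(w):w\in\mathcal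 S^-\}\cup\{\mathsf{Enc}(w)\cdot\mathit{op}:w\in\mathrm{pref}(\mathcal S),\ \mathit{op}\in\Sigma_{\mathsf{Act}},\ \mathit{op}\not\sim\mathsf{Act}(w)\}$. $\widehat D=(Q,\widehat\Sigma,q_0,\delta,F)$ is a deterministic finite automaton with possibly partial transition function $\delta$ (a word is accepted iff its run exists and ends in $F$) such that: (i) $\widehat D$ accepts every word of $\widehat{\mathcal S}^+$ and rejects every word of $\widehat{\mathcal S}^-$; (ii) every transition comes from a prefix of a positive sample: whenever $\delta(q,x)=q'$ with $x\in\widehat\Sigma$, there is a word $u$ with $ux\in\mathrm{pref}(\widehat{\mathcal S}^+)$ and $\delta(q_0,u)=q$. (These properties hold e.g. for the output of the RPNI algorithm, which merges states of the prefix tree acceptor of $\widehat{\mathcal S}^+$ while staying consistent with $\widehat{\mathcal S}$.) *)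

From mathcomp Require Import all_boot all_algebra.
Set Implicit Arguments. Unset Strict Implicit. Unset Printing Implicit Defensive.
Import GRing.Theory Num.Theory.

(* An action tuple in {0,1} x {0,+1,-1,bot}^k, with k = #|Sigma|:
   component 0 is a bool, components indexed by letters sigma : Sigma,
   None = bot, Some d = d (an integer). *)
Definition act_t (Sigma : finType) := (bool * {ffun Sigma -> option int})%type.

(* The enriched alphabet: inl (a, b) is the letter a^b (b = false <-> 0),
   inr act is the fresh action letter act. *)
Definition hletter (Sigma : finType) := ((Sigma * bool) + act_t Sigma)%type.

Definition inpref (Sigma : finType) (Sp Sm : seq (seq Sigma)) (w : seq Sigma) : bool :=
  has (prefix w) (Sp ++ Sm).

Definition sgn (d : nat) : bool := d != 0%N.

Definition Act (Sigma : finType) (Sp Sm : seq (seq Sigma)) (ce : seq Sigma -> nat)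
    (w : seq Sigma) : act_t Sigma :=
  (sgn (ce w),
   [ffun s : Sigma => if inpref Sp Sm (rcons w s)
                      then Some ((ce (rcons w s))%:Z - (ce w)%:Z)%R else None]).

Definition act_similar (Sigma : finType) (x y : act_t Sigma) : bool :=
  (x.1 != y.1) ||
  [forall i, (x.2 i == None) || (y.2 i == None) || (x.2 i == y.2 i)].

(* Enc(w)[0] = w[0]^0, Enc(w)[i] = w[i]^{sgn(ce(w[0..i-1]))} for i > 0 *)
Definition Enc (Sigma : finType) (ce : seq Sigma -> nat) (w : seq Sigma)
    : seq (hletter Sigma) :=
  [seq inl (x.2, (x.1 != 0%N) && sgn (ce (take x.1 w)))
     | x <- zip (iota 0 (size w)) w].

Definition SigmaAct (Sigma : finType) (Sp Sm : seq (seq Sigma)) (ce : seq Sigma -> nat)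
    (op : act_t Sigma) : Prop :=
  exists w, inpref Sp Sm w /\ op = Act Sp Sm ce w.

Definition hpos (Sigma : finType) (Sp Sm : seq (seq Sigma)) (ce : seq Sigma -> nat)
    (v : seq (hletter Sigma)) : Prop :=
  (exists2 w, w \in Sp & v = Enc ce w) \/
  (exists w, inpref Sp Sm w /\ v = rcons (Enc ce w) (inr (Act Sp Sm ce w))).

Definition hneg (Sigma : finType) (Sp Sm : seq (seq Sigma)) (ce : seq Sigma -> nat)
    (v : seq (hletter Sigma)) : Prop :=
  (exists2 w, w \in Sm & v = Enc ce w) \/
  (exists w op, [/\ inpref Sp Sm w, SigmaAct Sp Sm ce op,
                    ~~ act_similar op (Act Sp Sm ce w) & v = rcons (Enc ce w) (inr op)]).

Definition hpos_pref (Sigma : finType) (Sp Sm : seq (seq Sigma)) (ce : seq Sigma -> nat)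
    (u : seq (hletter Sigma)) : Prop :=
  exists v, hpos Sp Sm ce v /\ prefix u v.

Definition dfa_run (Q A : Type) (delta : Q -> A -> option Q) (q : Q) (u : seq A) : option Q :=
  foldl (fun oq a => if oq is Some q' then delta q' a else None) (Some q) u.

Definition accepts (Q A : Type) (delta : Q -> A -> option Q) (q0 : Q) (F : pred Q)
    (u : seq A) : bool :=
  if dfa_run delta q0 u is Some q then F q else false.

(* Enc(w1)·Act(w1) is a positive sample; if Act(w1) were not similar to
   Act(w2), then Enc(w2)·Act(w1) would be a negative sample.  Since the runs on
   Enc(w1) and Enc(w2) end in the same state, the automaton accepts both
   extensions or neither, contradicting consistency.  Only consistency (i) with
   the enriched sample is needed. *)
From mathcomp Require Import all_boot all_algebra.

Set Implicit Arguments.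
Unset Strict Implicit.
Unset Printing Implicit Defensive.

Section DfaRun.

Variables (Q A : Type) (delta : Q -> A -> option Q).

Lemma dfa_run_rcons (q : Q) (u : seq A) (a : A) :
  dfa_run delta q (rcons u a) = obind (delta^~ a) (dfa_run delta q u).
Proof. by rewrite /dfa_run foldl_rcons; case: foldl. Qed.

Lemma accepts_rcons_run_eq (q0 : Q) (F : pred Q) (u1 u2 : seq A) (a : A) :
  dfa_run delta q0 u1 = dfa_run delta q0 u2 ->
  accepts delta q0 F (rcons u1 a) = accepts delta q0 F (rcons u2 a).
Proof. by rewrite /accepts !dfa_run_rcons => ->. Qed.

End DfaRun.

Theorem lemma1 (Sigma : finType) (Sp Sm : seq (seq Sigma))
  (ce : seq Sigma -> nat)
  (Hdisj : forall w, w \in Sp -> w \notin Sm)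
  (Hce0 : ce [::] = 0%N)
  (Hcestep : forall w s, inpref Sp Sm (rcons w s) ->
     ((ce (rcons w s))%:Z - (ce w)%:Z)%R \in [:: 0%R; 1%R; (-1)%R])
  (Q : finType) (q0 : Q) (delta : Q -> hletter Sigma -> option Q) (F : pred Q)
  (Hpos : forall v, hpos Sp Sm ce v -> accepts delta q0 F v)
  (Hneg : forall v, hneg Sp Sm ce v -> ~~ accepts delta q0 F v)
  (Htrans : forall q x q', delta q x = Some q' ->
     exists u, hpos_pref Sp Sm ce (rcons u x) /\ dfa_run delta q0 u = Some q)
  (w1 w2 : seq Sigma) (q : Q) :
  inpref Sp Sm w1 -> inpref Sp Sm w2 ->
  dfa_run delta q0 (Enc ce w1) = Some q -> dfa_run delta q0 (Enc ce w2) = Some q ->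
  act_similar (Act Sp Sm ce w1) (Act Sp Sm ce w2).
Proof.
move=> pref_w1 pref_w2 run_w1 run_w2; apply/negPn/negP => not_similar.
pose a : hletter Sigma := inr (Act Sp Sm ce w1).
have acc_w1 : accepts delta q0 F (rcons (Enc ce w1) a).
  by apply: Hpos; right; exists w1.
have rej_w2 : ~~ accepts delta q0 F (rcons (Enc ce w2) a).
  by apply: Hneg; right; exists w2, (Act Sp Sm ce w1); split => //; exists w1.
by move: rej_w2; rewrite -(accepts_rcons_run_eq F a (etrans run_w1 (esym run_w2))) acc_w1.
Qed.
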